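(* Consider the two-unicast wireline network (''butterfly network 1'') with nodes $\mathsf{S}_1,\mathsf{S}_2,\mathsf{M}_1,\mathsf{M}_2,\mathsf{D}_1,\mathsf{D}_2$ and seven directed edges: edge 1 from $\mathsf{S}_1$ to $\mathsf{M}_1$, edge 2 from $\mathsf{S}_2$ to $\mathsf{M}_1$, edge 3 from $\mathsf{M}_1$ to $\mathsf{M}_2$, edge 4 from $\mathsf{S}_1$ to $\mathsf{D}_2$, edge 5 from $\mathsf{S}_2$ to $\mathsf{D}_1$, edge 6 from $\mathsf{M}_2$ to $\mathsf{D}_2$, edge 7 from $\mathsf{M}_2$ to $\mathsf{D}_1$, where edge $i$ has capacity $\mathsf{C}_i\ge 0$. Then every nonnegative rate pair $(R_1,R_2)$ satisfying $$R_1\le \min\{\mathsf{C}_1,\mathsf{C}_7\},\quad R_2\le \min\{\mathsf{C}_2,\mathsf{C}_6\},$$ $$R_1+R_2\le \mathsf{C}_3+\min\{R_2,\mathsf{C}_4,\mathsf{C}_5\},\quad R_1+R_2\le \mathsf{C}_3+\min\{R_1,\mathsf{C}_4,\mathsf{C}_5\}$$ is achievable (without security constraints).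
   Context: Network model: a directed acyclic graph; each edge $e$ is a noiseless orthogonal channel of capacity $\mathsf{C}_e$, carrying symbols from $\mathbb{F}_q$ (over $n$ channel uses edge $e$ carries a word $X_e^n$ of at most $n\mathsf{C}_e$ $q$-ary symbols' worth of information; received $Y_e^n=X_e^n$). Source $\mathsf{S}_i$ ($i=1,2$) has a message $W_i$, uniform, with $q$-ary entropy $nR_i$, $W_1,W_2$ independent; $W_i$ must be decoded at $\mathsf{D}_i$. A rate pair $(R_1,R_2)$ is achievable if for some block length $n$ there are encoding functions for every edge—an edge leaving $\mathsf{S}_i$ carries a function of $W_i$ only, and any other edge carries a function of the symbols received on the incoming edges of its tail node—and decoding functions $\phi_j$ applied to the symbols received on the incoming edges of $\mathsf{D}_j$ such that $\mathsf{D}_j$ recovers $W_j$ with vanishing error probability, $j=1,2$. *)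

From Stdlib Require Import Reals Lra Lia Arith List ZArith Znumtheory.
Import ListNotations.
Open Scope R_scope.

Definition prime_power (q : nat) : Prop :=
  exists p k : nat, prime (Z.of_nat p) /\ (1 <= k)%nat /\ q = (p ^ k)%nat.

Definition count_pairs (M1 M2 : nat) (P : nat -> nat -> bool) : nat :=
  length (filter (fun w => P (fst w) (snd w)) (list_prod (seq 0 M1) (seq 0 M2))).

(* A code of block length n: message sets [0,M1), [0,M2) (W1, W2 uniform and
   independent), edge alphabets [0, A e) with A e <= q^(n C e) (i.e. at most
   n C_e q-ary symbols' worth), encoders f1,f4 (functions of W1), f2,f5
   (functions of W2), f3 (of edges 1,2), f6,f7 (of edge 3), and decoders
   phi1 (at D1, from edges 5,7), phi2 (at D2, from edges 4,6).
   The error probability of D_j is the fraction of message pairs (w1,w2)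
   on which phi_j fails to output w_j.
   (R1,R2) is achievable if for every eps > 0 there is a code with
   q-ary rates (log_q M_i)/n >= R_i - eps and both error probabilities <= eps. *)
Definition butterfly1_achievable (q : nat) (C : nat -> R) (R1 R2 : R) : Prop :=
  forall eps : R, 0 < eps ->
  exists (n M1 M2 : nat) (A : nat -> nat)
         (f1 f2 f4 f5 f6 f7 : nat -> nat) (f3 : nat -> nat -> nat)
         (phi1 phi2 : nat -> nat -> nat),
    (1 <= n)%nat /\
    Rpower (INR q) (INR n * (R1 - eps)) <= INR M1 /\
    Rpower (INR q) (INR n * (R2 - eps)) <= INR M2 /\
    (forall e, (1 <= e <= 7)%nat -> INR (A e) <= Rpower (INR q) (INR n * C e)) /\
    (forall w1, (w1 < M1)%nat -> (f1 w1 < A 1%nat)%nat /\ (f4 w1 < A 4%nat)%nat) /\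
    (forall w2, (w2 < M2)%nat -> (f2 w2 < A 2%nat)%nat /\ (f5 w2 < A 5%nat)%nat) /\
    (forall x1 x2, (x1 < A 1%nat)%nat -> (x2 < A 2%nat)%nat -> (f3 x1 x2 < A 3%nat)%nat) /\
    (forall x3, (x3 < A 3%nat)%nat -> (f6 x3 < A 6%nat)%nat /\ (f7 x3 < A 7%nat)%nat) /\
    INR (count_pairs M1 M2 (fun w1 w2 =>
           negb (Nat.eqb (phi1 (f5 w2) (f7 (f3 (f1 w1) (f2 w2)))) w1)))
      <= eps * INR (M1 * M2) /\
    INR (count_pairs M1 M2 (fun w1 w2 =>
           negb (Nat.eqb (phi2 (f4 w1) (f6 (f3 (f1 w1) (f2 w2)))) w2)))
      <= eps * INR (M1 * M2).

(** Each message [W_i] is split into [kt] shared symbols [a_i] and [k_i]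
    private symbols [b_i].  Source [S_i] sends [a_i] on its side edge to the
    opposite destination and all of [W_i] to [M_1]; the bottleneck edge 3
    carries [a_1 + a_2] (mod [q^kt]) together with [b_1] and [b_2], and [M_2]
    forwards [(a_1 + a_2, b_i)] to [D_i], who subtracts the side information
    [a_j] to recover [a_i].  The code has zero error, and choosing [kt/n] close
    to the common rate [t = min (R_1, R_2, C_4, C_5)] and [k_i/n] close to
    [R_i - t] meets every capacity constraint. *)

From Stdlib Require Import Reals Lra Lia List ZArith.
Open Scope R_scope.

Section RelayCode.

Local Open Scope nat_scope.

Variable T : nat.
Hypothesis T_gt0 : 0 < T.

Definition pack (a b : nat) : nat := a + T * b.

Lemma mod_lt_T (w : nat) : w mod T < T.
Proof. apply Nat.mod_upper_bound; lia. Qed.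

Lemma pack_mod (a b : nat) : a < T -> pack a b mod T = a.
Proof. intros Ha; symmetry; apply (Nat.mod_unique _ _ b); unfold pack; lia. Qed.

Lemma pack_div (a b : nat) : a < T -> pack a b / T = b.
Proof. intros Ha; symmetry; apply (Nat.div_unique _ _ _ a); unfold pack; lia. Qed.

Lemma pack_lt (a b Y : nat) : a < T -> b < Y -> pack a b < T * Y.
Proof. unfold pack; nia. Qed.

Lemma pack_mod_div (w : nat) : pack (w mod T) (w / T) = w.
Proof. unfold pack; pose proof (Nat.div_mod w T ltac:(lia)); lia. Qed.

Lemma add_mod_sub_cancel_r (a b : nat) : a < T -> b < T -> ((a + b) mod T + T - b) mod T = a.
Proof.
  intros Ha Hb.
  destruct (Nat.lt_ge_cases (a + b) T) as [Hs | Hs].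
  - rewrite (Nat.mod_small (a + b)) by lia.
    symmetry; apply (Nat.mod_unique _ _ 1); lia.
  - assert (Hmod : (a + b) mod T = a + b - T)
      by (symmetry; apply (Nat.mod_unique _ _ 1); lia).
    rewrite Hmod; symmetry; apply (Nat.mod_unique _ _ 0); lia.
Qed.

Variable Y1 : nat.
Hypothesis Y1_gt0 : 0 < Y1.

(* The relay packs [(a_1 + a_2) mod T] with [b_1 + Y1 * b_2], where
   [w_i = pack a_i b_i]; [M_2] keeps only [b_i] for destination [D_i]. *)
Definition relay (x1 x2 : nat) : nat :=
  pack ((x1 mod T + x2 mod T) mod T) (x1 / T + Y1 * (x2 / T)).

Definition forward1 (z : nat) : nat := pack (z mod T) (z / T mod Y1).

Definition forward2 (z : nat) : nat := pack (z mod T) (z / T / Y1).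

Definition unmix (side z : nat) : nat := pack ((z mod T + T - side) mod T) (z / T).

Lemma relay_lt (Y2 x1 x2 : nat) : x1 < T * Y1 -> x2 < T * Y2 -> relay x1 x2 < T * Y1 * Y2.
Proof.
  intros Hx1 Hx2; rewrite <- Nat.mul_assoc; apply pack_lt.
  - apply mod_lt_T.
  - pose proof (Nat.Div0.div_lt_upper_bound _ _ _ Hx1).
    pose proof (Nat.Div0.div_lt_upper_bound _ _ _ Hx2).
    nia.
Qed.

Lemma forward1_lt (z : nat) : forward1 z < T * Y1.
Proof. apply pack_lt; apply Nat.mod_upper_bound; lia. Qed.

Lemma forward2_lt (Y2 z : nat) : z < T * Y1 * Y2 -> forward2 z < T * Y2.
Proof.
  intros Hz; apply pack_lt; [apply mod_lt_T |].
  apply Nat.Div0.div_lt_upper_bound; apply Nat.Div0.div_lt_upper_bound; lia.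
Qed.

Lemma relay_mod_div (w1 w2 : nat) :
  relay w1 w2 mod T = (w1 mod T + w2 mod T) mod T /\
  relay w1 w2 / T = w1 / T + Y1 * (w2 / T).
Proof.
  unfold relay.
  split; [apply pack_mod | apply pack_div]; apply mod_lt_T.
Qed.

Lemma unmix_forward1 (w1 w2 : nat) : w1 < T * Y1 ->
  unmix (w2 mod T) (forward1 (relay w1 w2)) = w1.
Proof.
  intros Hw1; destruct (relay_mod_div w1 w2) as [Emod Ediv].
  assert (Hb1 : (w1 / T + Y1 * (w2 / T)) mod Y1 = w1 / T).
  { symmetry; apply (Nat.mod_unique _ _ (w2 / T)); [| lia].
    now apply Nat.Div0.div_lt_upper_bound. }
  unfold unmix, forward1; rewrite pack_mod, pack_div, Emod, Ediv, Hb1 by apply mod_lt_T.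
  rewrite add_mod_sub_cancel_r by apply mod_lt_T.
  apply pack_mod_div.
Qed.

Lemma unmix_forward2 (w1 w2 : nat) : w1 < T * Y1 ->
  unmix (w1 mod T) (forward2 (relay w1 w2)) = w2.
Proof.
  intros Hw1; destruct (relay_mod_div w1 w2) as [Emod Ediv].
  assert (Hb2 : (w1 / T + Y1 * (w2 / T)) / Y1 = w2 / T).
  { symmetry; apply (Nat.div_unique _ _ _ (w1 / T)); [| lia].
    now apply Nat.Div0.div_lt_upper_bound. }
  unfold unmix, forward2; rewrite pack_mod, pack_div, Emod, Ediv, Hb2 by apply mod_lt_T.
  rewrite (Nat.add_comm (w1 mod T)), add_mod_sub_cancel_r by apply mod_lt_T.
  apply pack_mod_div.
Qed.

End RelayCode.

Lemma prime_power_ge1 (q : nat) : prime_power q -> (1 <= q)%nat.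
Proof.
  intros (p & k & [Hp _] & _ & ->).
  assert (Hpk : (p ^ k <> 0)%nat) by (apply Nat.pow_nonzero; lia).
  lia.
Qed.

Lemma INR_pow_Rpower (q k : nat) : (1 <= q)%nat -> INR (q ^ k) = Rpower (INR q) (INR k).
Proof.
  intros Hq; rewrite Rpower_pow, pow_INR; [reflexivity |].
  apply lt_0_INR; lia.
Qed.

Lemma pow_le_Rpower (q k : nat) (x : R) :
  (1 <= q)%nat -> INR k <= x -> INR (q ^ k) <= Rpower (INR q) x.
Proof.
  intros Hq Hk; rewrite INR_pow_Rpower by exact Hq.
  apply Rle_Rpower; [apply (le_INR 1); exact Hq | exact Hk].
Qed.

Lemma Rpower_le_pow (q k : nat) (x : R) :
  (1 <= q)%nat -> x <= INR k -> Rpower (INR q) x <= INR (q ^ k).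
Proof.
  intros Hq Hk; rewrite INR_pow_Rpower by exact Hq.
  apply Rle_Rpower; [apply (le_INR 1); exact Hq | exact Hk].
Qed.

Lemma count_pairs_eq0 (M1 M2 : nat) (P : nat -> nat -> bool) :
  (forall w1 w2, (w1 < M1)%nat -> (w2 < M2)%nat -> P w1 w2 = false) ->
  count_pairs M1 M2 P = 0%nat.
Proof.
  intros HP; unfold count_pairs.
  destruct (filter _ _) as [| [w1 w2] l] eqn:E; [reflexivity |].
  assert (Hw : In (w1, w2) (filter (fun w => P (fst w) (snd w))
                 (list_prod (seq 0 M1) (seq 0 M2))))
    by (rewrite E; left; reflexivity).
  apply filter_In in Hw as [Hw HPw]; apply in_prod_iff in Hw as [Hw1 Hw2].
  apply in_seq in Hw1; apply in_seq in Hw2.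
  simpl in HPw; rewrite HP in HPw by lia; discriminate.
Qed.

Definition edge_exponent (kt k1 k2 e : nat) : nat :=
  match e with
  | 1%nat | 7%nat => (kt + k1)%nat
  | 2%nat | 6%nat => (kt + k2)%nat
  | 4%nat | 5%nat => kt
  | _ => (kt + k1 + k2)%nat
  end.

Lemma butterfly1_achievable_of_exponents (q : nat) (C : nat -> R) (R1 R2 : R) :
  (1 <= q)%nat ->
  (forall eps, 0 < eps -> exists n kt k1 k2 : nat,
     (1 <= n)%nat /\
     INR n * (R1 - eps) <= INR (kt + k1) /\
     INR n * (R2 - eps) <= INR (kt + k2) /\
     forall e, (1 <= e <= 7)%nat -> INR (edge_exponent kt k1 k2 e) <= INR n * C e) ->
  butterfly1_achievable q C R1 R2.
Proof.
  intros Hq Hexp eps Heps.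
  destruct (Hexp eps Heps) as (n & kt & k1 & k2 & Hn & Hrate1 & Hrate2 & Hcap).
  assert (Hpos : forall k, (0 < q ^ k)%nat)
    by (intros k; apply Nat.neq_0_lt_0, Nat.pow_nonzero; lia).
  assert (Hnoerr : forall M, INR 0 <= eps * INR M)
    by (intros M; simpl; apply Rmult_le_pos; [lra | apply pos_INR]).
  exists n, (q ^ (kt + k1))%nat, (q ^ (kt + k2))%nat,
    (fun e => q ^ edge_exponent kt k1 k2 e)%nat,
    (fun w => w), (fun w => w), (fun w => w mod q ^ kt)%nat, (fun w => w mod q ^ kt)%nat,
    (forward2 (q ^ kt) (q ^ k1)), (forward1 (q ^ kt) (q ^ k1)), (relay (q ^ kt) (q ^ k1)),
    (unmix (q ^ kt)), (unmix (q ^ kt)).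
  cbn [edge_exponent].
  split; [exact Hn |].
  split; [now apply Rpower_le_pow |].
  split; [now apply Rpower_le_pow |].
  split; [intros e He; now apply pow_le_Rpower, Hcap |].
  rewrite !Nat.pow_add_r.
  set (T := (q ^ kt)%nat); set (Y1 := (q ^ k1)%nat); set (Y2 := (q ^ k2)%nat).
  assert (HT : (0 < T)%nat) by apply Hpos.
  assert (HY1 : (0 < Y1)%nat) by apply Hpos.
  split; [intros w1 Hw1; split; [exact Hw1 | now apply mod_lt_T] |].
  split; [intros w2 Hw2; split; [exact Hw2 | now apply mod_lt_T] |].
  split; [intros x1 x2 Hx1 Hx2; now apply relay_lt |].
  split; [intros x3 Hx3; split; [now apply forward2_lt | now apply forward1_lt] |].
  split.
  - rewrite count_pairs_eq0; [apply Hnoerr |].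
    intros w1 w2 Hw1 _.
    now rewrite unmix_forward1, Nat.eqb_refl.
  - rewrite count_pairs_eq0; [apply Hnoerr |].
    intros w1 w2 Hw1 _.
    now rewrite unmix_forward2, Nat.eqb_refl.
Qed.

Lemma nat_floor_exists (x : R) : 0 <= x -> exists k : nat, INR k <= x < INR k + 1.
Proof.
  intros Hx; destruct (archimed x) as [Hup1 Hup2].
  assert (Hup : (0 < up x)%Z) by (apply lt_IZR; lra).
  exists (Z.to_nat (up x - 1)).
  rewrite INR_IZR_INZ, Z2Nat.id, minus_IZR by lia; simpl; lra.
Qed.

Lemma common_rate_exists (R1 R2 c3 c4 c5 : R) :
  0 <= R1 -> 0 <= R2 -> 0 <= c4 -> 0 <= c5 ->
  R1 + R2 <= c3 + Rmin R2 (Rmin c4 c5) ->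
  R1 + R2 <= c3 + Rmin R1 (Rmin c4 c5) ->
  exists t, 0 <= t /\ t <= R1 /\ t <= R2 /\ t <= c4 /\ t <= c5 /\ R1 + R2 - t <= c3.
Proof.
  intros; exists (Rmin R1 (Rmin R2 (Rmin c4 c5))).
  unfold Rmin in *; repeat destruct Rle_dec; repeat split; lra.
Qed.

(* Losing less than one symbol to each of the two floors [kt] and [k_i] costs
   at most [2/n <= eps] in rate. *)
Lemma butterfly1_exponents (C : nat -> R) (R1 R2 eps : R) :
  0 <= C 4%nat -> 0 <= C 5%nat -> 0 <= R1 -> 0 <= R2 ->
  R1 <= Rmin (C 1%nat) (C 7%nat) ->
  R2 <= Rmin (C 2%nat) (C 6%nat) ->
  R1 + R2 <= C 3%nat + Rmin R2 (Rmin (C 4%nat) (C 5%nat)) ->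
  R1 + R2 <= C 3%nat + Rmin R1 (Rmin (C 4%nat) (C 5%nat)) ->
  0 < eps ->
  exists n kt k1 k2 : nat,
    (1 <= n)%nat /\
    INR n * (R1 - eps) <= INR (kt + k1) /\
    INR n * (R2 - eps) <= INR (kt + k2) /\
    forall e, (1 <= e <= 7)%nat -> INR (edge_exponent kt k1 k2 e) <= INR n * C e.
Proof.
  intros HC4 HC5 HR1 HR2 H17 H26 Hsum2 Hsum1 Heps.
  destruct (common_rate_exists _ _ _ _ _ HR1 HR2 HC4 HC5 Hsum2 Hsum1)
    as (t & Ht & Ht1 & Ht2 & Ht4 & Ht5 & Ht3).
  assert (HC1 : R1 <= C 1%nat) by (eapply Rle_trans; [exact H17 | apply Rmin_l]).
  assert (HC7 : R1 <= C 7%nat) by (eapply Rle_trans; [exact H17 | apply Rmin_r]).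
  assert (HC2 : R2 <= C 2%nat) by (eapply Rle_trans; [exact H26 | apply Rmin_l]).
  assert (HC6 : R2 <= C 6%nat) by (eapply Rle_trans; [exact H26 | apply Rmin_r]).
  destruct (nat_floor_exists (2 / eps)) as (m & _ & Hm).
  { apply Rlt_le, Rdiv_lt_0_compat; lra. }
  set (n := S m).
  assert (Hn0 : 0 <= INR n) by apply pos_INR.
  assert (Hneps : 2 <= INR n * eps).
  { replace 2 with (2 / eps * eps) by (field; lra).
    apply Rmult_le_compat_r; [lra |].
    unfold n; rewrite S_INR; lra. }
  destruct (nat_floor_exists (INR n * t)) as (kt & Hkt & Hkt'); [nra |].
  destruct (nat_floor_exists (INR n * (R1 - t))) as (k1 & Hk1 & Hk1'); [nra |].
  destruct (nat_floor_exists (INR n * (R2 - t))) as (k2 & Hk2 & Hk2'); [nra |].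
  exists n, kt, k1, k2.
  split; [unfold n; lia |].
  rewrite !plus_INR; split; [nra | split; [nra |]].
  intros e He.
  destruct e as [| [| [| [| [| [| [| [| e]]]]]]]]; try lia;
    cbn [edge_exponent]; rewrite ?plus_INR; nra.
Qed.

Theorem theorem1 (q : nat) (C : nat -> R) (R1 R2 : R) :
  prime_power q ->
  (forall e, (1 <= e <= 7)%nat -> 0 <= C e) ->
  0 <= R1 -> 0 <= R2 ->
  R1 <= Rmin (C 1%nat) (C 7%nat) ->
  R2 <= Rmin (C 2%nat) (C 6%nat) ->
  R1 + R2 <= C 3%nat + Rmin R2 (Rmin (C 4%nat) (C 5%nat)) ->
  R1 + R2 <= C 3%nat + Rmin R1 (Rmin (C 4%nat) (C 5%nat)) ->
  butterfly1_achievable q C R1 R2.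
Proof.
  intros Hq HC HR1 HR2 H17 H26 Hsum2 Hsum1.
  apply butterfly1_achievable_of_exponents; [now apply prime_power_ge1 |].
  intros eps Heps.
  apply butterfly1_exponents; auto; apply HC; lia.
Qed.
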